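(* Let $(\frac pq,\frac rs)$ be a Farey pair of order $n$ with $q\ge 2$. Put $d=\lfloor n/q\rfloor$, $\delta=\gcd(d,s)$, $d=d_1\delta$, $s=s_1\delta$. Let $\alpha\in[0,1]$, $\beta=1-\alpha$, $j\in\{0,\dots,\delta-1\}$, and $$g_{\alpha,j}(t)=(t^q-\beta)^{d_1}-\alpha^{d_1}t^{qd_1-s_1}e^{2\pi i j/\delta},\qquad \hat g_{\alpha,j}(t)=t^{qd_1}-\beta-\alpha t^{qd_1-s_1}e^{2\pi i j/(\delta d_1)}.$$ If $\hat t_1,\dots,\hat t_N$ are the nonzero roots of $\hat g_{\alpha,j}$ listed with multiplicity, then $\hat t_1^{d_1},\dots,\hat t_N^{d_1}$ are the nonzero roots of $g_{\alpha,j}$ listed with multiplicity.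
   Context: $\mathcal{F}_n=\{p/q:0\le p<q\le n,\ \gcd(p,q)=1\}$; a Farey pair of order $n$ is a pair $(\frac pq,\frac rs)$ of elements of $\mathcal F_n$ with $\frac pq<\frac rs$ and no element of $\mathcal F_n$ strictly between them. $g_{\alpha,j}$ and $\hat g_{\alpha,j}$ are regarded as rational functions of $t$ (the exponent $qd_1-s_1$ may be negative). *)

From HB Require Import structures.
From mathcomp Require Import all_boot all_order all_algebra.
From mathcomp Require Import reals trigo.
From mathcomp Require Import complex.
Set Implicit Arguments. Unset Strict Implicit. Unset Printing Implicit Defensive.
Import Order.TTheory GRing.Theory Num.Theory.
Local Open Scope ring_scope.

Definition farey_elem (n p q : nat) : Prop := (p < q <= n)%N /\ coprime p q.

Definition fracQ (p q : nat) : rat := p%:R / q%:R.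

Definition farey_pair (n p q r s : nat) : Prop :=
  [/\ farey_elem n p q, farey_elem n r s, fracQ p q < fracQ r s &
      forall a b, farey_elem n a b -> ~ (fracQ p q < fracQ a b < fracQ r s)].

Definition expI (R : realType) (theta : R) : R[i] := (cos theta +i* sin theta)%C.

(* The rational function g_{alpha,j}(t) = (t^q-beta)^d1 - alpha^d1 t^(q d1 - s1) zeta
   is represented by the polynomial t^s1 * g_{alpha,j}(t) (note q*d1 - s1 + s1 >= 0);
   multiplying by t^s1 does not change nonzero roots nor their multiplicities. *)
Definition g_num (R : realType) (q d1 s1 : nat) (alpha : R) (zeta : R[i]) : {poly R[i]} :=
  'X^s1 * ('X^q - (real_complex _ (1 - alpha))%:P) ^+ d1
  - (real_complex _ (alpha ^+ d1) * zeta) *: 'X^(q * d1).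

(* t^s1 * ghat_{alpha,j}(t) = t^(q d1 + s1) - beta t^s1 - alpha t^(q d1) zeta' *)
Definition ghat_num (R : realType) (q d1 s1 : nat) (alpha : R) (zeta : R[i]) : {poly R[i]} :=
  'X^(q * d1 + s1) - real_complex _ (1 - alpha) *: 'X^s1 - (real_complex _ alpha * zeta) *: 'X^(q * d1).

From HB Require Import structures.
From mathcomp Require Import all_boot all_order all_algebra.
From mathcomp Require Import reals trigo.
From mathcomp Require Import complex.
From mathcomp Require Import ring lra.
Set Implicit Arguments.
Unset Strict Implicit.
Unset Printing Implicit Defensive.
Import Order.TTheory GRing.Theory Num.Theory.
Local Open Scope ring_scope.

(* Write m = d1, beta = 1 - alpha and c = alpha * zeta', where zeta' ^+ m is
   the root of unity occurring in g.  For a primitive m-th root of unity om,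
   ghat (om^k t) = om^(k s1) A(t) - B(t) with A = t^s1 (t^(q m) - beta) and
   B = c t^(q m); as s1 is coprime to m, om^s1 is again primitive, so the
   product over k < m is +-(A^m - B^m), that is
       g (t^m) = +- \prod_(k < m) ghat (om^k t).
   At a root u of t^m = w, which is simple, the multiplicity of w in g is
   thus the sum of the multiplicities of the om^k u in ghat, i.e. the number
   of t_i with t_i^m = w. *)

Section Multiplicity.
Variable F : fieldType.
Implicit Types (p q : {poly F}) (x : F).

Lemma mupX x p k : p != 0 -> mup x (p ^+ k) = (k * mup x p)%N.
Proof.
move=> p_neq0; elim: k => [|k IHk]; first by rewrite expr0 mupNroot ?root1.
by rewrite exprS mupM ?expf_neq0 // IHk mulSn.
Qed.

Lemma mup_prod (I : Type) (r : seq I) (G : I -> {poly F}) x :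
  (forall i, G i != 0) ->
  mup x (\prod_(i <- r) G i) = (\sum_(i <- r) mup x (G i))%N.
Proof.
move=> G_neq0; elim: r => [|i r IHr]; first by rewrite !big_nil mupNroot ?root1.
rewrite !big_cons mupM ?G_neq0 ?IHr //.
apply: (big_ind (fun p => p != 0)) => [|p1 p2|j _].
- exact: oner_neq0.
- exact: mulf_neq0.
- exact: G_neq0.
Qed.

Lemma mup_comp p q x : p != 0 -> q - (q.[x])%:P != 0 ->
  mup x (p \Po q) = (mup q.[x] p * mup x (q - (q.[x])%:P))%N.
Proof.
move=> p_neq0 qc_neq0.
have [k [r]] := multiplicity_XsubC p q.[x]; rewrite p_neq0 /= => rNqx ->.
rewrite [in RHS]mupMr // mup_XsubCX eqxx comp_polyM mupMr; last first.
  by rewrite /root horner_comp.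
by rewrite rmorphXn /= comp_polyB comp_polyX comp_polyC mupX.
Qed.

Lemma mup_comp_scaleX p e x : p != 0 -> e != 0 ->
  mup x (p \Po (e *: 'X)) = mup (e * x) p.
Proof.
move=> p_neq0 e_neq0.
have eX_sub : e *: 'X - ((e *: 'X).[x])%:P = e%:P * ('X - x%:P).
  by rewrite hornerZ hornerX mulrBr -mul_polyC polyCM.
rewrite mup_comp // eX_sub; last by rewrite mulf_neq0 ?polyC_eq0 ?polyXsubC_eq0.
by rewrite mupMr ?rootC // (@mup_XsubCX _ 1) eqxx muln1 hornerZ hornerX.
Qed.

Lemma mup_XnsubC x m : x != 0 -> m%:R != 0 :> F ->
  mup x ('X^m - (x ^+ m)%:P) = 1%N.
Proof.
move=> x_neq0 m_neq0; have m_gt0 : (0 < m)%N.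
  by rewrite lt0n; apply: contraNneq m_neq0 => ->.
rewrite rmorphXn subrXX mupMl; first by rewrite (@mup_XsubCX _ 1) eqxx.
rewrite /root horner_sum (eq_bigr (fun _ => x ^+ m.-1)); last first.
  move=> i _; rewrite hornerM hornerXn horner_exp hornerC -exprD subnK //.
  by rewrite -ltnS prednK.
by rewrite sumr_const card_ord -mulr_natl mulf_eq0 negb_or m_neq0 expf_neq0.
Qed.

End Multiplicity.

Lemma eq_poly_horner (F : numDomainType) (p q : {poly F}) :
  (forall x, p.[x] = q.[x]) -> p = q.
Proof.
move=> eq_pq; apply/eqP; rewrite -subr_eq0; apply/eqP.
apply: (@roots_geq_poly_eq0 _ _ [seq i%:R | i <- iota 0 (size (p - q))]).
- by apply/allP => x _; rewrite /root !hornerE eq_pq subrr.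
- by rewrite map_inj_uniq ?iota_uniq // => i j /eqP; rewrite eqr_nat => /eqP.
- by rewrite size_map size_iota.
Qed.

Section RootsOfUnity.
Variables (F : fieldType) (m : nat) (om : F).
Hypothesis om_prim : m.-primitive_root om.

Lemma prod_prim_root_mulB a b :
  \prod_(k < m) (om ^+ k * a - b) = (-1) ^+ m * (b ^+ m - a ^+ m).
Proof.
have m_gt0 := prim_order_gt0 om_prim.
have [->|a_neq0] := eqVneq a 0.
  under eq_bigr do rewrite mulr0 sub0r.
  by rewrite prodr_const card_ord expr0n gtn_eqF //= subr0 -[- b]mulN1r exprMn.
have factor_k (k : 'I_m) : om ^+ k * a - b = - a * (b / a - om ^+ k).
  by field.
under eq_bigr do rewrite factor_k.
rewrite big_split /= prodr_const card_ord.
have -> : \prod_(k < m) (b / a - om ^+ k) = ('X^m - 1).[b / a].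
  rewrite -(factor_Xn_sub_1 om_prim) horner_prod big_mkord.
  by apply: eq_bigr => k _; rewrite hornerXsubC.
rewrite !hornerE -[- a]mulN1r exprMn expr_div_n.
by field; rewrite expf_neq0.
Qed.

Lemma count_mem_map_expn u (ts : seq F) : u != 0 ->
  count_mem (u ^+ m) [seq t ^+ m | t <- ts] =
  (\sum_(k < m) count_mem (om ^+ k * u)%R ts)%N.
Proof.
move=> u_neq0; elim: ts => [|t ts IHts] /=; first by rewrite big1.
rewrite big_split /= IHts; congr (_ + _)%N.
have [tm_eq|tm_neq] := eqVneq (t ^+ m) (u ^+ m); last first.
  rewrite big1 // => k _; apply/eqP; rewrite eqb0; apply: contra tm_neq => /eqP ->.
  by rewrite exprMn exprAC (prim_expr_order om_prim) expr1n mul1r.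
have /(prim_rootP om_prim)[i t_eq] : (t / u) ^+ m = 1.
  by rewrite expr_div_n tm_eq divff // expf_neq0.
rewrite (bigD1 i) //= -t_eq divfK // eqxx big1 // => k k_neq_i.
rewrite -[t](divfK u_neq0) t_eq (inj_eq (mulIf u_neq0)).
rewrite (eq_prim_root_expr om_prim) !modn_small //.
by rewrite val_eqE eq_sym (negbTE k_neq_i).
Qed.

End RootsOfUnity.

Section PowerSubstitution.
Variables (F : numFieldType) (q m s : nat) (b c om : F).
Hypotheses (om_prim : m.-primitive_root om) (s_m_coprime : coprime s m).

Local Notation ghat := ('X^(q * m + s) - b *: 'X^s - c *: 'X^(q * m)).
Local Notation g := ('X^s * ('X^q - b%:P) ^+ m - c ^+ m *: 'X^(q * m)).

Lemma ghat_neq0 : (0 < q)%N -> (0 < s)%N -> ghat != 0.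
Proof.
move=> q_gt0 s_gt0; have qm_gt0 : (0 < q * m)%N.
  by rewrite muln_gt0 q_gt0 (prim_order_gt0 om_prim).
have top_neq_s : (q * m + s == s)%N = false.
  by rewrite -{2}[s]add0n eqn_add2r eqn0Ngt qm_gt0.
have top_neq_qm : (q * m + s == q * m)%N = false.
  by rewrite -{2}[(q * m)%N]addn0 eqn_add2l eqn0Ngt s_gt0.
apply/eqP => /(congr1 (coefp (q * m + s))) /eqP.
rewrite /= !coefB !coefZ !coefXn eqxx top_neq_s top_neq_qm.
by rewrite !mulr0 !subr0 coef0 oner_eq0.
Qed.

Lemma horner_ghat_rot x k :
  ghat.[om ^+ k * x] =
  (om ^+ s) ^+ k * (x ^+ s * (x ^+ (q * m) - b)) - c * x ^+ (q * m).
Proof.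
have om_qm : (om ^+ k) ^+ (q * m) = 1.
  by rewrite -exprM mulnA mulnC exprM (prim_expr_order om_prim) expr1n.
rewrite !(hornerD, hornerN, hornerZ, hornerXn) !exprMn !exprD om_qm mul1r exprAC.
ring.
Qed.

Lemma g_comp_Xn :
  g \Po 'X^m = (-1) ^+ m.+1 *: \prod_(k < m) (ghat \Po (om ^+ k *: 'X)).
Proof.
apply: eq_poly_horner => x; rewrite horner_comp hornerZ horner_prod hornerXn.
under eq_bigr do rewrite horner_comp hornerZ hornerX horner_ghat_rot.
have sign_m : (-1) ^+ m.+1 * (-1) ^+ m = -1 :> F.
  by rewrite -exprD -signr_odd addSn /= addnn odd_double.
rewrite prod_prim_root_mulB ?prim_root_exp_coprime // mulrA sign_m mulN1r opprB.
rewrite !(hornerD, hornerN, hornerM, hornerZ, horner_exp, hornerX, hornerC).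
by rewrite !exprMn -[_ ^+ m ^+ q]exprM mulnC ![x ^+ m ^+ _]exprAC.
Qed.

End PowerSubstitution.

Lemma count_map_expn_mup (F : closedFieldType) (m : nat) (om c : F)
    (P G : {poly F}) (ts : seq F) :
  m.-primitive_root om -> c != 0 -> P != 0 ->
  G \Po 'X^m = c *: \prod_(k < m) (P \Po (om ^+ k *: 'X)) ->
  (forall z, z != 0 -> count_mem z ts = mup z P) ->
  forall w, w != 0 -> count_mem w [seq t ^+ m | t <- ts] = mup w G.
Proof.
move=> om_prim c_neq0 P_neq0 G_Xm mup_P w w_neq0.
have m_gt0 := prim_order_gt0 om_prim.
have om_neq0 : om != 0.
  apply/eqP => om0; have := prim_expr_order om_prim.
  by rewrite om0 expr0n gtn_eqF //= => /eqP; rewrite eq_sym oner_eq0.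
have rot_neq0 (k : 'I_m) : P \Po (om ^+ k *: 'X) != 0.
  by rewrite comp_poly2_eq0 // size_scale ?size_polyX ?expf_neq0.
have prod_neq0 : \prod_(k < m) (P \Po (om ^+ k *: 'X)) != 0.
  by apply/prodf_neq0 => k _.
have G_neq0 : G != 0.
  apply/eqP => G0; move: G_Xm; rewrite G0 comp_poly0 => /esym/eqP.
  by rewrite scaler_eq0 (negbTE c_neq0) (negbTE prod_neq0).
have [u u_root] : exists u, root ('X^m - w%:P) u.
  by apply/closed_rootP; rewrite size_XnsubC // eqSS -lt0n.
have w_eq : w = u ^+ m by move: u_root; rewrite /root !hornerE subr_eq0 => /eqP.
have u_neq0 : u != 0.
  by apply/eqP => u0; move: w_neq0; rewrite w_eq u0 expr0n gtn_eqF //= eqxx.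
have mup_G : mup w G = mup u (G \Po 'X^m).
  have Xm_sub_neq0 : 'X^m - (('X^m).[u])%:P != 0.
    by rewrite -size_poly_eq0 size_XnsubC.
  rewrite mup_comp // hornerXn mup_XnsubC ?(prim_root_natf_neq0 om_prim) //.
  by rewrite muln1 w_eq.
rewrite mup_G G_Xm -mul_polyC mupMr ?rootC // mup_prod //.
rewrite w_eq (count_mem_map_expn om_prim) //.
apply: eq_bigr => k _.
by rewrite mup_comp_scaleX ?expf_neq0 // mup_P // mulf_neq0 ?expf_neq0.
Qed.

Lemma divn_gcdn_gt0 a b : (0 < a)%N -> (0 < a %/ gcdn a b)%N.
Proof.
move=> a_gt0; rewrite divn_gt0 ?gcdn_gt0 ?a_gt0 //.
by rewrite dvdn_leq ?dvdn_gcdl.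
Qed.

Lemma coprime_divn_gcdn a b : (0 < a)%N ->
  coprime (a %/ gcdn a b) (b %/ gcdn a b).
Proof.
move=> a_gt0; have g_gt0 : (0 < gcdn a b)%N by rewrite gcdn_gt0 a_gt0.
rewrite /coprime -(eqn_pmul2r g_gt0) mul1n muln_gcdl.
by rewrite !divnK ?dvdn_gcdl ?dvdn_gcdr.
Qed.

Section ComplexExponential.
Variable R : realType.
Implicit Types a b : R.

Lemma expI0 : expI (0 : R) = 1.
Proof. by rewrite /expI cos0 sin0. Qed.

Lemma expID a b : expI (a + b) = expI a * expI b.
Proof.
rewrite /expI cosD sinD; apply/eqP; rewrite eq_complex /=.
by apply/andP; split; apply/eqP; ring.
Qed.

Lemma expIMn a n : expI (a *+ n) = expI a ^+ n.
Proof.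
elim: n => [|n IHn]; first by rewrite mulr0n expI0.
by rewrite mulrS expID IHn exprS.
Qed.

Lemma expI_eq1 a : 0 < a < pi *+ 2 -> expI a != 1.
Proof.
case/andP=> a_gt0 a_lt2pi; apply/negP => /eqP; rewrite /expI.
move=> /(congr1 (@complex.Re R)) /= cos_a.
have cos_inj0 b : b \in `[0, pi] -> cos b = 1 -> b = 0.
  by move=> b_in cos_b; apply: cos_inj => //; rewrite ?cos0 // in_itv /= lexx pi_ge0.
have [a_le_pi|pi_lt_a] := leP a pi.
  have : a = 0 by apply: cos_inj0; rewrite // in_itv /=; apply/andP; split; lra.
  lra.
have : pi *+ 2 - a = 0.
  apply: cos_inj0; last by rewrite cosB cos2pi sin2pi mul1r mul0r addr0.
  by rewrite in_itv /=; apply/andP; split; lra.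
lra.
Qed.

Lemma expI2pi : expI (pi *+ 2 : R) = 1.
Proof. by rewrite /expI cos2pi sin2pi. Qed.

Lemma expI_prim_root m :
  (0 < m)%N -> m.-primitive_root (expI (pi *+ 2 / m%:R : R)).
Proof.
move=> m_gt0; have m_pos : 0 < m%:R :> R by rewrite ltr0n.
apply/andP; split=> //; apply/forallP => i; apply/eqP.
rewrite unity_rootE -expIMn -[_ *+ i.+1]mulr_natr mulrAC.
have [i_lt_m|i_ge_m] := ltnP i.+1 m; last first.
  have -> : i.+1 = m by apply/eqP; rewrite eqn_leq i_ge_m ltn_ord.
  by rewrite mulfK ?expI2pi ?eqxx // gt_eqF.
rewrite ltn_eqF // (negbTE (expI_eq1 _)) //.
have pi2_gt0 : 0 < pi *+ 2 :> R by rewrite pmulrn_lgt0 ?pi_gt0.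
by rewrite divr_gt0 ?mulr_gt0 ?ltr0n //= ltr_pdivrMr // ltr_pM2l // ltr_nat.
Qed.

End ComplexExponential.

Theorem lemma4p4 (R : realType) (n p q r s : nat) (alpha : R) (j : nat)
  (ts : seq R[i]) :
  farey_pair n p q r s -> (2 <= q)%N ->
  let d := (n %/ q)%N in
  let delta := gcdn d s in
  let d1 := (d %/ delta)%N in
  let s1 := (s %/ delta)%N in
  0 <= alpha <= 1 -> (j < delta)%N ->
  let ghat := ghat_num q d1 s1 alpha
                (expI (2 * pi * j%:R / (delta * d1)%:R)) in
  let g := g_num q d1 s1 alpha (expI (2 * pi * j%:R / delta%:R)) in
  (0 \notin ts) -> (forall z : R[i], z != 0 -> count_mem z ts = mup z ghat) ->
  forall w : R[i], w != 0 ->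
    count_mem w (map (fun t => t ^+ d1) ts) = mup w g.
Proof.
move=> [[/andP[_ q_le_n] _] [/andP[r_lt_s _] _] _ _] q_ge2 d delta d1 s1 _ _.
move=> ghat g _ mup_ghat w w_neq0.
have q_gt0 : (0 < q)%N by apply: leq_trans q_ge2.
have d_gt0 : (0 < d)%N by rewrite divn_gt0.
have s_gt0 : (0 < s)%N by apply: leq_ltn_trans r_lt_s.
have d1_gt0 : (0 < d1)%N by apply: divn_gcdn_gt0.
have s1_gt0 : (0 < s1)%N by rewrite /s1 /delta gcdnC divn_gcdn_gt0.
have s1_d1_coprime : coprime s1 d1.
  by rewrite coprime_sym coprime_divn_gcdn.
have om_prim := expI_prim_root R d1_gt0.
pose z : R[i] := expI (2 * pi * j%:R / (delta * d1)%:R).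
have z_expn : expI (2 * pi * j%:R / delta%:R) = z ^+ d1.
  rewrite -expIMn natrM; congr expI.
  by field; rewrite !pnatr_eq0 -!lt0n d1_gt0 gcdn_gt0 d_gt0.
have g_eq : g = 'X^s1 * ('X^q - (real_complex R (1 - alpha))%:P) ^+ d1
    - (real_complex R alpha * z) ^+ d1 *: 'X^(q * d1).
  by rewrite /g /g_num z_expn exprMn rmorphXn.
rewrite g_eq.
apply: (count_map_expn_mup (c := (-1) ^+ d1.+1) om_prim _ _ _ mup_ghat w_neq0).
- by rewrite signr_eq0.
- by rewrite /ghat /ghat_num; apply: (ghat_neq0 _ _ om_prim).
- by rewrite /ghat /ghat_num; apply: (g_comp_Xn _ _ _ om_prim).
Qed.
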